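(* Let $a,b,g,h>0$ with $g>a+b+h$. Then the Minkowskian planar 4R linkage with these link lengths is of superrocker–crank type.
   Context: Link lengths: $a$ input crank, $b$ output crank, $g$ ground (fixed link), $h$ coupler. Put $T_1=g+b-h-a$, $T_2=a-g+b-h$, $T_3=g-a-b-h$, $T_4=g-a+b+h$, $T_5=a-h+g+b$. The input crank is a crank if $T_1T_2\ge0$ and $T_3T_4\le0$, a rocker if $T_1T_2<0$ and $T_3T_4\le0$, and a superrocker if $T_1T_2<0$ and $T_3T_4>0$. The output crank is a crank if $T_1\ge0$ and $T_4T_5\ge0$, a rocker if $T_1<0$ and $T_4T_5\ge0$, and a superrocker if $T_1<0$ and $T_4T_5<0$. The linkage is of type ''X–Y'' if its input crank is of type X and its output crank of type Y. *)

From mathcomp Require Import all_boot all_order all_algebra.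
Set Implicit Arguments. Unset Strict Implicit. Unset Printing Implicit Defensive.
Import Order.TTheory GRing.Theory Num.Theory.
Local Open Scope ring_scope.

Inductive crank_type := Crank | Rocker | Superrocker.

Section Linkage.
Variable R : realFieldType.
(* a input crank, b output crank, g ground, h coupler *)
Definition T1 (a b g h : R) := g + b - h - a.
Definition T2 (a b g h : R) := a - g + b - h.
Definition T3 (a b g h : R) := g - a - b - h.
Definition T4 (a b g h : R) := g - a + b + h.
Definition T5 (a b g h : R) := a - h + g + b.

Definition input_type (a b g h : R) : option crank_type :=
  let p12 := T1 a b g h * T2 a b g h in
  let p34 := T3 a b g h * T4 a b g h in
  if (0 <= p12) && (p34 <= 0) then Some Crank
  else if (p12 < 0) && (p34 <= 0) then Some Rocker
  else if (p12 < 0) && (0 < p34) then Some Superrocker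
  else None.

Definition output_type (a b g h : R) : option crank_type :=
  let t1 := T1 a b g h in
  let p45 := T4 a b g h * T5 a b g h in
  if (0 <= t1) && (0 <= p45) then Some Crank
  else if (t1 < 0) && (0 <= p45) then Some Rocker
  else if (t1 < 0) && (p45 < 0) then Some Superrocker
  else None.

Definition linkage_type (a b g h : R) (X Y : crank_type) : Prop :=
  input_type a b g h = Some X /\ output_type a b g h = Some Y.
End Linkage.

(* When the ground link is longer than the other three together, T1, T3, T4, T5 are
   positive while T2 is negative, which fixes every sign in the classification. *)
From mathcomp Require Import all_boot all_order all_algebra.
From mathcomp Require Import lra.
Import Order.TTheory GRing.Theory Num.Theory.
Local Open Scope ring_scope.

Section Classification.
Variables (R : realFieldType) (a b g h : R).

Lemma input_type_superrocker :
  T1 a b g h * T2 a b g h < 0 -> 0 < T3 a b g h * T4 a b g h ->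
  input_type a b g h = Some Superrocker.
Proof.
move=> p12_lt0 p34_gt0; rewrite /input_type p12_lt0 p34_gt0.
by rewrite leNgt p12_lt0 leNgt p34_gt0.
Qed.

Lemma output_type_crank :
  0 <= T1 a b g h -> 0 <= T4 a b g h * T5 a b g h ->
  output_type a b g h = Some Crank.
Proof. by move=> t1_ge0 p45_ge0; rewrite /output_type t1_ge0 p45_ge0. Qed.

End Classification.

Theorem mainTheorem9 (R : realFieldType) (a b g h : R)
  (ha : 0 < a) (hb : 0 < b) (hg : 0 < g) (hh : 0 < h)
  (hgt : a + b + h < g) :
  linkage_type a b g h Superrocker Crank.
Proof.
have t1_gt0 : 0 < T1 a b g h by rewrite /T1; lra.
have t2_lt0 : T2 a b g h < 0 by rewrite /T2; lra.
have t3_gt0 : 0 < T3 a b g h by rewrite /T3; lra.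
have t4_gt0 : 0 < T4 a b g h by rewrite /T4; lra.
have t5_gt0 : 0 < T5 a b g h by rewrite /T5; lra.
split.
- by apply: input_type_superrocker; [rewrite pmulr_rlt0 | rewrite mulr_gt0].
- by apply: output_type_crank; [exact: ltW | rewrite mulr_ge0 ?ltW].
Qed.
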